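(* Let $n$ be odd, let $A$ be a finite set of alternatives, and let $P=(P_1,\ldots,P_n)$ be a profile of linear orders on $A$ held by voters $V=\{1,\ldots,n\}$. If $P$ is single-crossing with respect to a tree $T=(V,E)$ whose vertex set is the set of voters, then there exists $i\in\{1,\ldots,n\}$ such that the preference order $P_i$ coincides with the majority relation of $P$.
   Context: A profile is an $n$-tuple of (strict) linear orders on $A$; voter $i$ prefers $a$ to $b$, written $a\succ_i b$, if $aP_ib$. The majority relation of $P$: $a\succeq b$ iff $|\{i: a\succ_i b\}|\ge|\{i: b\succ_i a\}|$; for $n$ odd this is a complete asymmetric relation, with $a\succ b$ iff a strict majority of voters prefers $a$ to $b$. Given a tree $T=(V,E)$ on the voter set, $P$ is single-crossing with respect to $T$ if for every pair of distinct alternatives $a,b\in A$ one of the following holds: (i) there is an edge $e\in E$ (an ''$ab$-cut'') such that, removing $e$ from $T$, the two resulting subtrees have vertex sets $V_1,V_2$ with all voters in $V_1$ preferring $a$ to $b$ and all voters in $V_2$ preferring $b$ to $a$; or (ii) all voters prefer $a$ to $b$, or all voters prefer $b$ to $a$ (a ''virtual'' cut). *)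

From mathcomp Require Import all_boot.
Set Implicit Arguments. Unset Strict Implicit. Unset Printing Implicit Defensive.

Definition strict_linear_order (A : finType) (r : rel A) : Prop :=
  irreflexive r /\ transitive r /\ (forall a b, a != b -> r a b || r b a).

Definition remove_edge (T : finType) (e : rel T) (u v : T) : rel T :=
  [rel x y | e x y && ~~ (((x == u) && (y == v)) || ((x == v) && (y == u)))].

(* A (simple, undirected) tree on the vertex set T: symmetric irreflexive
   edge relation, connected, and minimally connected (every edge is a bridge,
   i.e. the graph is acyclic). *)
Definition is_tree (T : finType) (e : rel T) : Prop :=
  symmetric e /\ irreflexive e /\
  (forall x y, connect e x y) /\
  (forall u v, e u v -> ~~ connect (remove_edge e u v) u v).

(* An ab-cut: an edge {u,v} such that after removing it, the component V1
   of u prefers a to b, and the rest V2 (the component of v) prefers b to a. *)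
Definition ab_cut (n : nat) (A : finType) (e : rel 'I_n) (P : 'I_n -> rel A)
    (a b : A) : Prop :=
  exists u v, e u v /\
    forall i : 'I_n,
      (connect (remove_edge e u v) u i -> P i a b) /\
      (~~ connect (remove_edge e u v) u i -> P i b a).

Definition single_crossing (n : nat) (A : finType) (e : rel 'I_n)
    (P : 'I_n -> rel A) : Prop :=
  forall a b : A, a != b ->
    ab_cut e P a b \/ (forall i, P i a b) \/ (forall i, P i b a).

(* Strict majority relation: a strict majority of voters prefers a to b
   (for n odd this is the strict part of the weak majority relation). *)
Definition majority (n : nat) (A : finType) (P : 'I_n -> rel A) : rel A :=
  fun a b => #|[set i | P i b a]| < #|[set i | P i a b]|.

(** A tree with an odd number of vertices has a centroid [c]: for every edge,
    [c] lies on the side of the edge containing a strict majority of the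
    vertices.  For a single-crossing profile and a pair [a != b], the voters
    preferring [a] to [b] are either everybody, nobody, or one side of an
    [ab]-cut; in each case [a] beats [b] in the majority relation exactly when
    voter [c] prefers [a] to [b]. *)

From mathcomp Require Import all_boot.
From mathcomp Require Import zify.
Set Implicit Arguments. Unset Strict Implicit.

Section ConnectFrom.

Variables (T : finType) (r : rel T) (w : T).

Lemma connect_invariant (Q : pred T) i :
  Q w -> (forall j k, Q j -> r j k -> Q k) -> connect r w i -> Q i.
Proof.
move=> Qw closedQ /connectP [s + ->].
elim: s w Qw => [|x s IHs] y Qy //= /andP [ryx pth].
exact: IHs (closedQ _ _ Qy ryx) pth.
Qed.

Lemma connect_sub_from (r' : rel T) i :
  (forall j k, connect r w j -> r j k -> r' j k) ->
  connect r w i -> connect r' w i.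
Proof.
move=> sub_r wi; suff /andP [] : connect r w i && connect r' w i by [].
apply: (connect_invariant (Q := fun j => connect r w j && connect r' w j)) wi.
  by rewrite !connect0.
move=> j k /andP [wj w'j] rjk; rewrite (connect_trans wj (connect1 rjk)).
exact: connect_trans w'j (connect1 (sub_r _ _ wj rjk)).
Qed.

End ConnectFrom.

Section TreeSides.

Variables (n : nat) (e : rel 'I_n).

Definition side (u v : 'I_n) : {set 'I_n} :=
  [set i | connect (remove_edge e u v) u i].

Lemma mem_side_left u v : u \in side u v.
Proof. by rewrite inE connect0. Qed.

Lemma remove_edgeC u v : remove_edge e v u =2 remove_edge e u v.
Proof. by move=> x y; rewrite /remove_edge /= orbC. Qed.

Lemma remove_edge_sym u v : symmetric e -> symmetric (remove_edge e u v).
Proof.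
move=> e_sym x y; rewrite /remove_edge /= e_sym.
by case: (x == u); case: (y == v); case: (x == v); case: (y == u).
Qed.

Lemma connect_remove_edge_ends u v i :
  (forall x y, connect e x y) ->
  connect (remove_edge e u v) u i || connect (remove_edge e u v) v i.
Proof.
move=> e_conn; pose from_ends j :=
  connect (remove_edge e u v) u j || connect (remove_edge e u v) v j.
apply: (connect_invariant (Q := from_ends) _ _ (e_conn u i)).
  by rewrite /from_ends connect0.
rewrite /from_ends => j k reach_j ejk.
have [/orP [] /andP [_ /eqP ->] | not_uv] :=
  boolP (((j == u) && (k == v)) || ((j == v) && (k == u))).
- by rewrite connect0 orbT.
- by rewrite connect0.
have rjk : remove_edge e u v j k by rewrite /remove_edge /= ejk not_uv.
by case/orP: reach_j => c; rewrite (connect_trans c (connect1 rjk)) ?orbT.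
Qed.

(* Removing [ab] cannot split [side p q] unless [a] and [b] both lie in it. *)
Lemma side_subset p q a b :
  (a \notin side p q) || (b \notin side p q) -> p \in side a b ->
  side p q \subset side a b.
Proof.
move=> ab_out p_ab; apply/subsetP => i; rewrite !inE => pi.
move: p_ab; rewrite inE => /connect_trans; apply.
apply: connect_sub_from pi => j k pj /[dup] rjk /andP [ejk _].
have pk := connect_trans pj (connect1 rjk).
rewrite /remove_edge /= ejk /=; apply/negP.
by case/orP=> /andP [/eqP jE /eqP kE]; move: ab_out; rewrite -jE -kE !inE pj pk.
Qed.

Hypothesis e_tree : is_tree e.

Lemma side_swap u v : e u v -> side v u = ~: side u v.
Proof.
case: e_tree => e_sym [_ [e_conn e_bridge]] euv; apply/setP => i.
have u_v_sym := sym_connect_sym (remove_edge_sym u v e_sym).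
rewrite in_setC !inE (eq_connect (remove_edgeC u v)).
apply/idP/idP => [vi | /negbTE ui].
- apply: contra (e_bridge _ _ euv) => ui.
  by rewrite (connect_trans ui) // u_v_sym.
- by have := connect_remove_edge_ends u v i e_conn; rewrite ui.
Qed.

Lemma card_side_swap u v : e u v -> #|side v u| = n - #|side u v|.
Proof. by move=> euv; rewrite side_swap // cardsCs setCK card_ord. Qed.

Lemma side_nested_or_disjoint u v x y :
  e u v -> e x y -> u \notin side x y ->
  side x y \proper side u v \/ side u v \subset ~: side x y.
Proof.
move=> euv exy u_out.
have [x_in | x_out] := boolP (x \in side u v).
  left; apply/properP; split; last by exists u; rewrite ?mem_side_left.
  by apply: side_subset; rewrite ?u_out.
right; rewrite -side_swap //; apply: side_subset; first by rewrite x_out orbT.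
by rewrite side_swap // in_setC.
Qed.

Hypothesis n_odd : odd n.

Definition heavy (u v : 'I_n) := n < #|side u v|.*2.

Lemma heavy_swap u v : e u v -> heavy v u = ~~ heavy u v.
Proof.
move=> euv; rewrite /heavy card_side_swap //.
have n_eq : n = n./2.*2.+1 by rewrite -[LHS]odd_double_half n_odd.
have le_side : #|side u v| <= n by rewrite -[leqRHS]card_ord max_card.
case: (ltnP n #|side u v|.*2) => /= ?; last by lia.
by apply/negbTE; rewrite -leqNgt; lia.
Qed.

(* The witness is the near endpoint of a heavy side of minimal size. *)
Lemma tree_centroid :
  exists c, forall u v, e u v -> (c \in side u v) = heavy u v.
Proof.
have n_gt0 := odd_gt0 n_odd.
pose heavy_edge (p : 'I_n * 'I_n) := e p.1 p.2 && heavy p.1 p.2.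
have [p0 heavy_p0 | no_heavy] := pickP heavy_edge; last first.
  exists (Ordinal n_gt0) => u v euv; have := no_heavy (v, u).
  rewrite /heavy_edge /= heavy_swap // (e_tree.1 v u) euv.
  by have := no_heavy (u, v); rewrite /heavy_edge /= euv => /= ->.
have [[u v] /andP [/= euv heavy_uv] min_uv] :=
  arg_minnP (fun p => #|side p.1 p.2|) heavy_p0.
have u_in_heavy x y : e x y -> heavy x y -> u \in side x y.
  move=> exy heavy_xy; apply/negPn/negP => u_out.
  case: (side_nested_or_disjoint euv exy u_out) => [lt_xy_uv | sub_uv].
    have := min_uv (x, y); rewrite /heavy_edge /= exy heavy_xy => /(_ isT).
    by rewrite leqNgt proper_card.
  have := subset_leq_card sub_uv; have := cardsC (side x y); rewrite card_ord.
  by move: heavy_uv heavy_xy; rewrite /heavy; lia.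
exists u => x y exy; apply/idP/idP => [u_xy | /(u_in_heavy _ _ exy) //].
apply: contraLR u_xy; have eyx : e y x by rewrite e_tree.1.
rewrite -heavy_swap // => /(u_in_heavy _ _ eyx).
by rewrite side_swap // in_setC.
Qed.

End TreeSides.

Lemma strict_linear_orderN (A : finType) (r : rel A) x y :
  strict_linear_order r -> x != y -> r y x = ~~ r x y.
Proof.
case=> irr [trans total] xy; apply/idP/idP => [ryx | nrxy].
- by apply: contraFN (irr y) => rxy; apply: trans ryx rxy.
- by have := total _ _ xy; rewrite (negbTE nrxy).
Qed.

Section Profiles.

Variables (n : nat) (A : finType) (P : 'I_n -> rel A).
Hypothesis P_linear : forall i, strict_linear_order (P i).

Lemma majority_supporters a b :
  a != b -> majority P a b = (n < #|[set i | P i a b]|.*2).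
Proof.
move=> ab; rewrite /majority.
have -> : [set i | P i b a] = ~: [set i | P i a b].
  by apply/setP => i; rewrite !inE strict_linear_orderN.
by have := cardsC [set i | P i a b]; rewrite card_ord; lia.
Qed.

Lemma ab_cut_supporters (e : rel 'I_n) a b :
  a != b -> ab_cut e P a b ->
  exists u v, e u v /\ [set i | P i a b] = side e u v.
Proof.
move=> ab [u [v [euv cut]]]; exists u, v; split=> //; apply/setP => i.
rewrite !inE; have [/(cut i).1 // | /(cut i).2] := boolP (connect _ u i).
by rewrite strict_linear_orderN // => /negbTE.
Qed.

End Profiles.

Theorem theorem1 (n : nat) (A : finType) (P : 'I_n -> rel A) (e : rel 'I_n) :
  odd n ->
  (forall i, strict_linear_order (P i)) ->
  is_tree e ->
  single_crossing e P ->
  exists i : 'I_n, forall a b : A, P i a b = majority P a b.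
Proof.
move=> n_odd P_linear e_tree P_sc.
have [c c_heavy] := tree_centroid e_tree n_odd.
exists c => a b; have [<- | ab] := eqVneq a b.
  by rewrite /majority ltnn; case: (P_linear c).
rewrite majority_supporters //.
have -> : P c a b = (c \in [set i | P i a b]) by rewrite inE.
case: (P_sc a b ab) => [/(ab_cut_supporters P_linear ab) | [all_ab | all_ba]].
- by case=> u [v [euv ->]]; rewrite c_heavy.
- have -> : [set i | P i a b] = setT by apply/setP => i; rewrite !inE all_ab.
  by rewrite in_setT cardsT card_ord; have := odd_gt0 n_odd; lia.
- have -> : [set i | P i a b] = set0.
    apply/setP => i; rewrite !inE; apply/negbTE.
    by rewrite -strict_linear_orderN ?all_ba.
  by rewrite in_set0 cards0.
Qed.
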